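(* Let $\Lambda=(\Lambda_1,\dots,\Lambda_d)$ be a $d$-partition of $\{1,\dots,N\}$ and consider the associated lumped chain. Then $$\mathbb E^\circ\tau^0_0=\prod_{k=1}^d\sqrt{\frac{\pi}{2}|\Lambda_k|}\,\bigl(1+O(|\Lambda_k|^{-1})\bigr).$$
   Context: Let $(\sigma_N(t))_{t\in\mathbb N}$ be the discrete-time simple random walk on $\{-1,1\}^N$ (jump to each Hamming neighbour with probability $1/N$). For a partition $\Lambda$ of $\{1,\dots,N\}$ into nonempty classes $\Lambda_1,\dots,\Lambda_d$, let $\gamma(\sigma)=(\gamma_1(\sigma),\dots,\gamma_d(\sigma))$ with $\gamma_k(\sigma)=|\Lambda_k|^{-1}\sum_{i\in\Lambda_k}\sigma_i$, and $\Gamma_{N,d}=\gamma(\{-1,1\}^N)$. The lumped chain $X_N(t)=\gamma(\sigma_N(t))$ is a Markov chain on $\Gamma_{N,d}$ with transition probabilities $r_N(x,x+s\frac{2}{|\Lambda_k|}u_k)=\frac{|\Lambda_k|}{N}\frac{1-sx_k}{2}$ ($s\in\{-1,1\}$, $u_k$ the canonical basis of $\mathbb R^d$) and reversible invariant measure $\mathbb Q_N(x)=2^{-N}\prod_{k=1}^d\binom{|\Lambda_k|}{|\Lambda_k|(1+x_k)/2}$. $\mathbb P^\circ,\mathbb E^\circ$ refer to the lumped chain; $\tau^x_J=\inf\{t>0:X_N(t)\in J\}$ for the chain started at $x$. The symbol $0$ denotes a fixed point of $\Gamma_{N,d}$ at which $\mathbb Q_N$ attains its maximum (the origin of $\mathbb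 R^d$ when all $|\Lambda_k|$ are even). *)

From HB Require Import structures.
From mathcomp Require Import all_boot all_order all_algebra.
From mathcomp Require Import all_classical all_reals all_analysis.
Set Implicit Arguments. Unset Strict Implicit. Unset Printing Implicit Defensive.
Import Order.TTheory GRing.Theory Num.Theory.
Local Open Scope ring_scope.

Section Lumped.
Variables (R : realType) (N d : nat) (lam : 'I_N -> 'I_d).

(* |Lambda_k|, the class Lambda_k = lam^{-1}(k) of the partition *)
Definition csize (k : 'I_d) : nat := #|[set i | lam i == k]|.

(* spin configurations sigma in {-1,1}^N : true = +1, false = -1 *)
Definition spin (b : bool) : R := if b then 1 else -1.

Definition gamma (sg : {ffun 'I_N -> bool}) : {ffun 'I_d -> R} :=
  [ffun k => (\sum_(i | lam i == k) spin (sg i)) / (csize k)%:R].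

(* Q_N(gamma(sigma)) = 2^{-N} prod_k binom(|Lambda_k|, |Lambda_k|(1+x_k)/2);
   |Lambda_k|(1+x_k)/2 is the number of +1 spins of sigma in Lambda_k *)
Definition Qs (sg : {ffun 'I_N -> bool}) : R :=
  (2 ^- N) * \prod_(k < d) ('C(csize k, #|[set i | (lam i == k) && sg i]|))%:R.

(* a move of the lumped chain: (k, s) moves x to x + s (2/|Lambda_k|) u_k *)
Definition stepf (x : {ffun 'I_d -> R}) (m : 'I_d * bool) : {ffun 'I_d -> R} :=
  [ffun j => x j + (if j == m.1 then spin m.2 * (2 / (csize m.1)%:R) else 0)].

Definition rate (x : {ffun 'I_d -> R}) (m : 'I_d * bool) : R :=
  (csize m.1)%:R / N%:R * ((1 - spin m.2 * x m.1) / 2).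

(* states X_1, ..., X_t visited along a sequence of moves started at x *)
Fixpoint walk (x : {ffun 'I_d -> R}) (ms : seq ('I_d * bool)) :
    seq {ffun 'I_d -> R} :=
  match ms with
  | [::] => [::]
  | m :: ms' => stepf x m :: walk (stepf x m) ms'
  end.

Fixpoint pathprob (x : {ffun 'I_d -> R}) (ms : seq ('I_d * bool)) : R :=
  match ms with
  | [::] => 1
  | m :: ms' => rate x m * pathprob (stepf x m) ms'
  end.

(* P°(tau^x_{z} > t) = P°(X_1 <> z, ..., X_t <> z | X_0 = x) *)
Definition tail_prob (x z : {ffun 'I_d -> R}) (t : nat) : R :=
  \sum_(ms : t.-tuple ('I_d * bool))
     pathprob x ms * (if all (fun y => y != z) (walk x ms) then 1 else 0).

(* E° tau^x_{z} = sum_{t >= 0} P°(tau^x_{z} > t)  (in [0, +oo]) *)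
Definition exp_hit (x z : {ffun 'I_d -> R}) : \bar R :=
  (\sum_(t <oo) (tail_prob x z t)%:E)%E.

End Lumped.

(* Started at gamma(sg), the lumped chain is the image under gamma of the
   walk on {-1,1}^N, whose kernel is doubly stochastic since each flip is an involution.
   Summing the tails P(tau > t) over all 2^N starting configurations therefore gives
   sum_sg P_sg(tau > t+1) = sum_sg P_sg(tau > t) - M P_z(tau_z > t), with M the number of
   configurations sent to z.  The tails vanish (z is reached within N steps with
   probability at least N^-N), so M E tau^z_z = 2^N, where M = prod_k C(n_k, c_k) and c_k
   is the number of +1 spins of class k at z.  Maximality of Q_N at z forces
   |2 c_k - n_k| <= 1, and the Wallis integrals I_n = int_0^pi sin^n, which satisfy
   n I_n^2 <= 2 pi <= (n+1) I_n^2, give 2^n / C(n, c) = sqrt(pi n / 2) (1 + O(1/n)) for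
   such c. *)

From mathcomp Require Import all_boot all_order all_algebra.
From mathcomp Require Import all_classical all_reals all_analysis.
From mathcomp Require Import ring lra zify.
Import Order.TTheory GRing.Theory Num.Theory.
Import numFieldNormedType.Exports.
Local Open Scope ring_scope.

Lemma bin_odd_mid k : 'C(k.*2.+1, k.+1) = 'C(k.*2.+1, k).
Proof. by rewrite -bin_sub -addnn; [congr 'C(_, _) | ]; lia. Qed.

Lemma bin_even_mid k : 'C(k.+1.*2, k.+1) = ('C(k.*2.+1, k) * 2)%N.
Proof. by rewrite doubleS binS bin_odd_mid muln2 addnn. Qed.

Lemma central_binS j : ('C(j.+1.*2, j.+1) * j.+1.*2 = 4 * j.*2.+1 * 'C(j.*2, j))%N.
Proof.
have := mul_bin_diag j.*2.+2 j; have := mul_bin_diag j.*2.+1 j.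
by rewrite bin_odd_mid doubleS /=; nia.
Qed.

Lemma bin_lt_binS n c : (c.*2.+2 <= n)%N -> ('C(n, c) < 'C(n, c.+1))%N.
Proof.
move=> cn; have C0 : (0 < 'C(n, c))%N by rewrite bin_gt0; lia.
by rewrite -(ltn_pmul2l (ltn0Sn c)) mul_bin_left ltn_pmul2r //; lia.
Qed.

Lemma bin_lt_binP n c : (n.+2 <= c.*2)%N -> (c <= n)%N -> ('C(n, c) < 'C(n, c.-1))%N.
Proof.
move=> nc cn; rewrite -(bin_sub cn) -(bin_sub (leq_trans (leq_pred c) cn)).
have -> : (n - c.-1 = (n - c).+1)%N by lia.
by apply: bin_lt_binS; lia.
Qed.

Lemma norm_sub1_le_sqr {R : realFieldType} (q e : R) :
  0 <= q -> 1 <= q ^+ 2 <= 1 + e -> `|q - 1| <= e.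
Proof. by move=> q0 /andP[q1 qe]; rewrite ger0_norm; nra. Qed.

Section Wallis.
Context {R : realType}.
Local Open Scope classical_set_scope.
Local Notation mu := (@lebesgue_measure R).

Definition wallis (n : nat) : R := \int[mu]_(x in `[0, pi]) (sin x ^+ n).

Lemma continuous_sinX n : continuous (fun x : R => sin x ^+ n).
Proof.
move=> x; apply: (@continuous_comp _ _ _ sin (fun y => y ^+ n)).
  exact: continuous_sin.
exact: exprn_continuous.
Qed.

Lemma integrable_0pi (f : R -> R) : continuous f -> mu.-integrable `[0, pi] (EFin \o f).
Proof.
move=> cf; apply: continuous_compact_integrable; first exact: segment_compact.
exact/continuous_subspaceT.
Qed.

Lemma wallis0 : wallis 0 = pi.
Proof.
rewrite /wallis; under eq_Rintegral do rewrite expr0.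
by rewrite Rintegral_cst //= lebesgue_measure_itv /= lte_fin pi_gt0 /= subr0 mul1r.
Qed.

Lemma wallis1 : wallis 1 = 2.
Proof.
rewrite /wallis; under eq_Rintegral do rewrite expr1.
rewrite /Rintegral (@continuous_FTC2 _ _ (- cos)) ?pi_gt0 //.
- have E (y : R) : (- cos) y = - cos y by [].
  by rewrite -EFinB /= !E cos0 cospi !opprK.
- exact/continuous_subspaceT/continuous_sin.
- split.
  + by move=> x _; exact/derivableN/derivable_cos.
  + by apply: cvgN; apply: cvg_at_right_filter; exact: continuous_cos.
  + by apply: cvgN; apply: cvg_at_left_filter; exact: continuous_cos.
- by move=> x _; rewrite derive1E deriveN // derive_val opprK.
Qed.

(* Integration by parts: sin^(n+1) cos has derivative (n+1) sin^n - (n+2) sin^(n+2),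
   as cos^2 = 1 - sin^2, and vanishes at 0 and pi. *)
Lemma wallisSS n : n.+2%:R * wallis n.+2 = n.+1%:R * wallis n.
Proof.
pose F := (@sin R) ^+ n.+1 * cos.
have FE y : F y = sin y ^+ n.+1 * cos y by rewrite /F exprfctE.
have dF x : is_derive x (1 : R) F (n.+1%:R * sin x ^+ n - n.+2%:R * sin x ^+ n.+2).
  apply: is_derive_eq; rewrite /GRing.scale /= exprfctE.
  have -> : cos x * (n.+1%:R * sin x ^+ n * cos x) = n.+1%:R * sin x ^+ n * cos x ^+ 2.
    by ring.
  by rewrite cos2sin2 !exprS -!natr1 expr0; ring.
have cF : continuous F.
  by move=> x; apply/differentiable_continuous/derivable1_diffP; case: (dF x).
have intc c k : mu.-integrable `[0, pi] (EFin \o (fun x => c * sin x ^+ k)).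
  by apply: integrable_0pi => x; apply: cvgM; [exact: cvg_cst | exact: continuous_sinX].
have : \int[mu]_(x in `[0, pi]) (n.+1%:R * sin x ^+ n - n.+2%:R * sin x ^+ n.+2) = 0.
  rewrite /Rintegral (@continuous_FTC2 _ _ F); last 4 first.
  - exact: pi_gt0.
  - by apply/continuous_subspaceT => x; apply: cvgB; apply: cvgM;
      (exact: cvg_cst || exact: continuous_sinX).
  - split; first by move=> x _; case: (dF x).
    + by apply: cvg_at_right_filter; exact: cF.
    + by apply: cvg_at_left_filter; exact: cF.
  - by move=> x _; rewrite derive1E derive_val.
  by rewrite !FE sinpi sin0 expr0n /= !mul0r subrr.
rewrite RintegralB // !RintegralZl //; try exact: integrable_0pi (continuous_sinX _).
by move/eqP; rewrite subr_eq0 => /eqP.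
Qed.

Lemma wallis_ge0 n : 0 <= wallis n.
Proof.
apply: Rintegral_ge0 => x; rewrite /= in_itv /= => /andP[x0 xpi].
by rewrite exprn_ge0 // sin_ge0_pi // x0 xpi.
Qed.

Lemma wallisS_le n : wallis n.+1 <= wallis n.
Proof.
apply: le_Rintegral => //; try exact: integrable_0pi (continuous_sinX _).
move=> x; rewrite /= in_itv /= => /andP[x0 xpi].
have s0 : 0 <= sin x by rewrite sin_ge0_pi // x0 xpi.
by rewrite exprS ler_piMl // ?exprn_ge0 // sin_le1.
Qed.

Lemma wallis_prod n : n.+1%:R * wallis n.+1 * wallis n = 2 * pi.
Proof.
elim: n => [|n IH]; first by rewrite wallis1 wallis0 mul1r.
by rewrite wallisSS -IH; ring.
Qed.

Lemma wallis_sqr_le n : n%:R * wallis n ^+ 2 <= 2 * pi.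
Proof.
case: n => [|n]; first by rewrite mul0r mulr_ge0 // ltW // pi_gt0.
rewrite -(wallis_prod n) expr2 mulrA ler_wpM2l ?wallisS_le //.
by rewrite mulr_ge0 ?wallis_ge0.
Qed.

Lemma wallis_sqr_ge n : 2 * pi <= n.+1%:R * wallis n ^+ 2.
Proof.
by rewrite -(wallis_prod n) expr2 mulrA ler_wpM2r ?wallis_ge0 // ler_wpM2l ?wallisS_le.
Qed.

Definition central_bin_prob (j : nat) : R := 'C(j.*2, j)%:R / 4 ^+ j.

Lemma central_bin_prob_gt0 j : 0 < central_bin_prob j.
Proof. by rewrite divr_gt0 ?exprn_gt0 // ltr0n bin_gt0 -addnn leq_addl. Qed.

Lemma wallis_double j : wallis j.*2 = pi * central_bin_prob j.
Proof.
elim: j => [|j IH]; first by rewrite wallis0 /central_bin_prob bin0 expr0 divr1 mulr1.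
apply: (@mulfI _ j.+1.*2%:R); first by rewrite pnatr_eq0 double_eq0.
rewrite [in LHS]doubleS wallisSS IH /central_bin_prob exprS.
have /(congr1 (fun m => m%:R : R)) := central_binS j; rewrite !natrM => e.
have j2 : j.+1.*2%:R != 0 :> R by rewrite pnatr_eq0 double_eq0.
have -> : 'C(j.+1.*2, j.+1)%:R = 4 * j.*2.+1%:R * 'C(j.*2, j)%:R / j.+1.*2%:R :> R.
  by rewrite -e mulfK.
by field; rewrite j2 expf_neq0.
Qed.

Lemma central_bin_prob_sqrt j n : (0 < j)%N -> n = j.*2 \/ n = j.*2.-1 ->
  `|(central_bin_prob j)^-1 / Num.sqrt (pi / 2 * n%:R) - 1| <= 2 / n%:R.
Proof.
move=> j0 hn; set p := central_bin_prob j.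
have p0 : 0 < p := central_bin_prob_gt0 j.
have pi0 : 0 < pi :> R := pi_gt0 R.
have n0 : 0 < n%:R :> R by rewrite ltr0n; case: hn => ->; lia.
have n_le : n%:R <= j.*2%:R :> R by rewrite ler_nat; case: hn => ->; lia.
have n_ge : j.*2.+1%:R <= n%:R + 2 :> R by rewrite -natrD ler_nat; case: hn => ->; lia.
set q := p^-1 / Num.sqrt (pi / 2 * n%:R).
have q0 : 0 <= q by rewrite divr_ge0 ?sqrtr_ge0 // invr_ge0 ltW.
have q2 : q ^+ 2 = 2 / (n%:R * (pi * p ^+ 2)).
  rewrite expr_div_n sqr_sqrtr; last by rewrite mulr_ge0 ?divr_ge0 // ltW.
  move: pi0; set r := pi => r0; clearbody r.
  by field; rewrite !gt_eqF.
set P := pi * p ^+ 2.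
have P0 : 0 < P by rewrite mulr_gt0 ?exprn_gt0.
have sqrE : (pi * p) ^+ 2 = pi * P by rewrite /P; ring.
have up : j.*2%:R * P <= 2.
  by have := wallis_sqr_le j.*2; rewrite wallis_double sqrE mulrCA (mulrC 2) ler_pM2l.
have lo : 2 <= j.*2.+1%:R * P.
  by have := wallis_sqr_ge j.*2; rewrite wallis_double sqrE mulrCA (mulrC 2) ler_pM2l.
apply: norm_sub1_le_sqr q0 _; rewrite q2; apply/andP; split.
  by rewrite -/P ler_pdivlMr; [nra | exact: mulr_gt0].
have -> : 1 + 2 / n%:R = (n%:R + 2) / n%:R :> R by field; rewrite gt_eqF.
rewrite -/P ler_pdivrMr; last exact: mulr_gt0.
have -> : (n%:R + 2) / n%:R * (n%:R * P) = (n%:R + 2) * P by field; rewrite gt_eqF.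
nra.
Qed.

Lemma exp2_div_bin_even j :
  (2 ^ j.*2)%:R / 'C(j.*2, j)%:R = (central_bin_prob j)^-1.
Proof. by rewrite invf_div -mul2n expnM natrX. Qed.

Lemma exp2_div_bin_odd k :
  (2 ^ k.*2.+1)%:R / 'C(k.*2.+1, k)%:R = (central_bin_prob k.+1)^-1.
Proof.
have C0 : 'C(k.*2.+1, k)%:R != 0 :> R by rewrite pnatr_eq0 -lt0n bin_gt0 -addnn; lia.
rewrite -exp2_div_bin_even bin_even_mid doubleS !expnS !natrM.
by field; rewrite C0.
Qed.

Lemma exp2_div_bin_sqrt n c : (0 < n)%N -> (n <= c.*2.+1)%N -> (c.*2 <= n.+1)%N ->
  `|(2 ^ n)%:R / 'C(n, c)%:R / Num.sqrt (pi / 2 * n%:R) - 1| <= 2 / n%:R :> R.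
Proof.
move=> n0 n_le n_ge.
have : [|| n == c.*2, n == c.*2.+1 | n.+1 == c.*2] by lia.
case/or3P => /eqP n_eq; last first.
  case: c n_eq {n_le n_ge} => [|k]; first by [].
  rewrite doubleS => -[->]; rewrite bin_odd_mid exp2_div_bin_odd.
  by apply: central_bin_prob_sqrt; [by [] | right; lia].
all: subst n.
- rewrite exp2_div_bin_odd; apply: central_bin_prob_sqrt; [by [] | right; lia].
- rewrite exp2_div_bin_even; apply: central_bin_prob_sqrt; [lia | by left].
Qed.

End Wallis.

Lemma nonincreasing_contraction_cvg0 {R : realType} (u : R ^nat) (m : nat) (q : R) :
  q < 1 -> (forall n, 0 <= u n) -> nonincreasing_seq u ->
  (forall n, u (n + m)%N <= q * u n) -> (u @ \oo --> 0)%classic.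
Proof.
move=> q1 u_ge0 u_dec u_contr.
have u_cvg : cvgn u.
  by apply: nonincreasing_is_cvgn => //; exists 0 => _ [n _ <-].
have L0 : 0 <= limn u by apply: limr_ge => //; exact: nearW.
have LqL : limn u <= q * limn u.
  apply: (@ler_cvg_to _ \oo%classic _ _ (fun n => u (n + m)%N) (fun n => q * u n)).
  - by rewrite cvg_shiftn.
  - exact: cvgM (cvg_cst q) u_cvg.
  - exact: nearW.
suff <- : limn u = 0 by [].
by apply/eqP; rewrite eq_le L0 andbT; nra.
Qed.

Lemma natr_card_set {R : pzSemiRingType} (T : finType) (P : pred T) :
  #|[set i | P i]|%:R = \sum_(i | P i) 1 :> R.
Proof. by rewrite sumr_const; congr _%:R; apply: eq_card => i; rewrite inE. Qed.

Section LumpedChain.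
Context {R : realType} {N d : nat} (lam : 'I_N -> 'I_d).
Local Notation xT := {ffun 'I_d -> R}.
Local Notation mT := ('I_d * bool)%type.

Lemma tail_prob0 (x z : xT) : tail_prob lam x z 0 = 1.
Proof.
rewrite /tail_prob (big_pred1 [tuple]) ?mulr1 // => ms.
by symmetry; apply/eqP; rewrite tuple0.
Qed.

Lemma tail_probS (x z : xT) t : tail_prob lam x z t.+1 =
  \sum_(m : mT) rate lam x m * ((stepf lam x m != z)%:R * tail_prob lam (stepf lam x m) z t).
Proof.
rewrite /tail_prob (reindex (fun p : mT * t.-tuple mT => [tuple of p.1 :: p.2])) /=; last first.
  exists (fun ms : t.+1.-tuple mT => (thead ms, [tuple of behead ms])).
    by move=> [m ms] _ /=; rewrite theadE; congr (_, _); apply: val_inj.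
  by move=> ms _ /=; rewrite [RHS]tuple_eta.
rewrite -(pair_big xpredT xpredT (fun m (ms : t.-tuple mT) =>
  pathprob lam x (m :: ms) * (if all (fun y => y != z) (walk lam x (m :: ms)) then 1 else 0))) /=.
apply: eq_bigr => m _; rewrite !mulr_sumr; apply: eq_bigr => ms _ /=.
by case: (stepf lam x m != z); rewrite /= ?mul1r ?mul0r ?mulr0 ?mulrA.
Qed.

End LumpedChain.

Section SpinFlip.
Context {R : realType} {N d : nat} (lam : 'I_N -> 'I_d).
Local Notation sgT := {ffun 'I_N -> bool}.

Definition nup (sg : sgT) (k : 'I_d) : nat := #|[set i | (lam i == k) && sg i]|.

Definition flip (sg : sgT) (i : 'I_N) : sgT := [ffun j => if j == i then ~~ sg j else sg j].

Lemma flipK i : involutive (flip^~ i).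
Proof. by move=> sg; apply/ffunP => j; rewrite !ffunE; case: eqP => // ->; rewrite negbK. Qed.

Lemma sum_flip {V : nmodType} (F : sgT -> V) i :
  \sum_(sg : sgT) F (flip sg i) = \sum_(sg : sgT) F sg.
Proof. by rewrite [RHS](reindex_inj (inv_inj (flipK i))). Qed.

Lemma nup_flip (sg : sgT) i k :
  (nup (flip sg i) k + ((lam i == k) && sg i) = nup sg k + ((lam i == k) && ~~ sg i))%N.
Proof.
rewrite /nup (cardsD1 i [set j | _ && flip sg i j]) (cardsD1 i [set j | _ && sg j]).
have -> : [set j | (lam j == k) && flip sg i j] :\ i = [set j | (lam j == k) && sg j] :\ i.
  by apply/setP => j; rewrite !inE ffunE; case: eqP.
by rewrite !inE ffunE eqxx; lia.
Qed.

Lemma sum_spin_nup (sg : sgT) k :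
  \sum_(i | lam i == k) spin R (sg i) = 2 * (nup sg k)%:R - (csize lam k)%:R.
Proof.
rewrite /nup /csize !natr_card_set big_mkcondr mulr_sumr -sumrB.
by apply: eq_bigr => i _; rewrite /spin; case: (sg i) => /=; ring.
Qed.

Lemma sum_spin_flip (sg : sgT) i k :
  \sum_(j | lam j == k) spin R (flip sg i j) =
  \sum_(j | lam j == k) spin R (sg j) + (if lam i == k then 2 * spin R (~~ sg i) else 0).
Proof.
have [<-|nik] := eqVneq (lam i) k; last first.
  rewrite addr0; apply: eq_bigr => j ljk; rewrite ffunE; case: eqP => [eji | //].
  by move: nik; rewrite -eji ljk.
rewrite [LHS](bigD1 i) // [in RHS](bigD1 i) //= ffunE eqxx.
under eq_bigr => j /andP[_ /negbTE ji] do rewrite ffunE ji.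
by rewrite /spin; case: (sg i) => /=; ring.
Qed.

Definition hamming (s1 s2 : sgT) : nat := #|[set i | s1 i != s2 i]|.

Lemma hamming_le (s1 s2 : sgT) : (hamming s1 s2 <= N)%N.
Proof. by rewrite -[X in (_ <= X)%N](card_ord N) max_card. Qed.

Lemma hamming_eq0 (s1 s2 : sgT) : hamming s1 s2 = 0%N -> s1 = s2.
Proof.
move/eqP; rewrite cards_eq0 => /eqP/setP eq0; apply/ffunP => i.
by apply/eqP; have := eq0 i; rewrite !inE => /negbFE.
Qed.

Lemma hamming_flip (s1 s2 : sgT) i :
  s1 i != s2 i -> hamming (flip s1 i) s2 = (hamming s1 s2).-1.
Proof.
move=> neq_i; rewrite /hamming (cardsD1 i [set j | s1 j != s2 j]) inE neq_i /=.
apply: eq_card => j; rewrite !inE ffunE.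
by have [->|//] := eqVneq j i; move: neq_i; case: (s1 i); case: (s2 i).
Qed.

Hypothesis lam_surj : forall k : 'I_d, exists i : 'I_N, lam i = k.

Lemma csize_gt0 k : (0 < csize lam k)%N.
Proof. by have [i lik] := lam_surj k; apply/card_gt0P; exists i; rewrite inE lik. Qed.

Lemma gamma_eq_nup (s1 s2 : sgT) :
  (gamma R lam s1 == gamma R lam s2) = [forall k, nup s1 k == nup s2 k].
Proof.
apply/eqP/forallP => [/ffunP eq_g k | eq_nup]; last first.
  by apply/ffunP => k; rewrite !ffunE !sum_spin_nup (eqP (eq_nup k)).
have n0 : (csize lam k)%:R != 0 :> R by rewrite pnatr_eq0 -lt0n csize_gt0.
have := eq_g k; rewrite !ffunE !sum_spin_nup => /(mulIf (invr_neq0 n0))/addIr.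
have two0 : (2 : R) != 0 by rewrite pnatr_eq0.
by move/(mulfI two0)/eqP; rewrite eqr_nat.
Qed.

Lemma gamma_flip (sg : sgT) i :
  gamma R lam (flip sg i) = stepf lam (gamma R lam sg) (lam i, ~~ sg i).
Proof.
apply/ffunP => k; rewrite !ffunE sum_spin_flip /= eq_sym.
case: eqP => [<-|_]; last by rewrite !addr0.
by rewrite mulrDl mulrA (mulrC _ 2).
Qed.

Lemma rate_gamma (sg : sgT) m :
  rate lam (gamma R lam sg) m = N%:R^-1 * \sum_(i | (lam i, ~~ sg i) == m) 1.
Proof.
case: m => k s; rewrite /rate ffunE /=.
rewrite [in RHS](eq_bigl (fun i => (lam i == k) && (~~ sg i == s))) // big_mkcondr.
have -> : \sum_(i | lam i == k) (if ~~ sg i == s then 1 else 0) =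
    ((csize lam k)%:R - spin R s * \sum_(i | lam i == k) spin R (sg i)) / 2 :> R.
  rewrite /csize natr_card_set mulr_sumr -sumrB mulr_suml; apply: eq_bigr => i _.
  by rewrite /spin; case: s; case: (sg i) => /=; lra.
have n0 : (csize lam k)%:R != 0 :> R by rewrite pnatr_eq0 -lt0n csize_gt0.
have N0 : N%:R != 0 :> R.
  by have [i _] := lam_surj k; rewrite pnatr_eq0 -lt0n (leq_ltn_trans _ (ltn_ord i)).
by field; rewrite n0 N0.
Qed.

Lemma sum_rate_stepf (sg : sgT) (f : {ffun 'I_d -> R} -> R) :
  \sum_(m : 'I_d * bool) rate lam (gamma R lam sg) m * f (stepf lam (gamma R lam sg) m) =
  N%:R^-1 * \sum_(i : 'I_N) f (gamma R lam (flip sg i)).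
Proof.
rewrite (partition_big (fun i => (lam i, ~~ sg i)) xpredT) // mulr_sumr.
apply: eq_bigr => m _; rewrite rate_gamma -mulrA mulr_suml; congr (_ * _).
by apply: eq_bigr => i /eqP <-; rewrite mul1r gamma_flip.
Qed.

End SpinFlip.

Section Maximizer.
Context {R : realType} {N d : nat} (lam : 'I_N -> 'I_d).
Local Notation sgT := {ffun 'I_N -> bool}.
Local Notation nup := (nup lam).

Lemma nup_le_csize (sg : sgT) k : (nup sg k <= csize lam k)%N.
Proof. by apply: subset_leq_card; apply/fintype.subsetP => i; rewrite !inE => /andP[]. Qed.

Lemma Qs_flip_lt (sg : sgT) i :
  ('C(csize lam (lam i), nup sg (lam i)) < 'C(csize lam (lam i), nup (flip sg i) (lam i)))%N ->
  Qs R lam sg < Qs R lam (flip sg i).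
Proof.
move=> lt_bin; rewrite /Qs ltr_pM2l ?exprn_gt0 ?invr_gt0 //.
rewrite [in X in X < _](bigD1 (lam i)) // [in X in _ < X](bigD1 (lam i)) //=.
rewrite [X in _ < _ * X](eq_bigr (fun k => 'C(csize lam k, nup sg k)%:R)) => [|k nik].
  rewrite ltr_pM2r ?ltr_nat //.
  by apply: prodr_gt0 => k _; rewrite ltr0n bin_gt0; exact: nup_le_csize.
by have := nup_flip lam sg i k; rewrite eq_sym (negbTE nik) /= !addn0 => <-.
Qed.

Lemma Qs_max_central (sg0 : sgT) : (forall sg, Qs R lam sg <= Qs R lam sg0) ->
  forall k, (csize lam k <= (nup sg0 k).*2.+1)%N /\ ((nup sg0 k).*2 <= (csize lam k).+1)%N.
Proof.
move=> sg0_max k; split; rewrite leqNgt; apply/negP => bad.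
- have [i /andP[/eqP lik sg0i]] : exists i, (lam i == k) && ~~ sg0 i.
    apply/existsP; apply: contraTT bad => /existsPn all_up.
    suff -> : nup sg0 k = csize lam k by lia.
    by apply: eq_card => i; rewrite !inE; have := all_up i; case: (lam i == k); case: (sg0 i).
  have := sg0_max (flip sg0 i); rewrite leNgt => /negP; apply; apply: Qs_flip_lt.
  have := nup_flip lam sg0 i (lam i); rewrite eqxx (negbTE sg0i) /= addn0 addn1 => ->.
  by rewrite lik; apply: bin_lt_binS; lia.
- have [i /andP[/eqP lik sg0i]] : exists i, (lam i == k) && sg0 i.
    have : (0 < nup sg0 k)%N by lia.
    by case/card_gt0P => i; rewrite inE => ?; exists i.
  have := sg0_max (flip sg0 i); rewrite leNgt => /negP; apply; apply: Qs_flip_lt.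
  have := nup_flip lam sg0 i (lam i); rewrite eqxx sg0i /= addn0 addn1 => nupS.
  rewrite lik in nupS *; rewrite -nupS in bad *.
  by apply: bin_lt_binP; [lia | rewrite nupS nup_le_csize].
Qed.

End Maximizer.

Section Fiber.
Context {N d : nat} (lam : 'I_N -> 'I_d).
Local Notation sgT := {ffun 'I_N -> bool}.

Definition upsets (sg : sgT) : {ffun 'I_d -> {set 'I_N}} :=
  [ffun k => [set i | (lam i == k) && sg i]].

Lemma upsets_inj : injective upsets.
Proof.
move=> s1 s2 /ffunP/(_ (lam _)) eq_up; apply/ffunP => i.
by have /setP/(_ i) := eq_up i; rewrite !ffunE !inE eqxx.
Qed.

Lemma card_nup_fiber (c : 'I_d -> nat) :
  #|[set sg : sgT | [forall k, nup lam sg k == c k]]| = (\prod_(k < d) 'C(csize lam k, c k))%N.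
Proof.
pose F k := [pred B : {set 'I_N} | (B \subset [set i | lam i == k]) && (#|B| == c k)].
rewrite -(card_imset _ upsets_inj).
transitivity #|family F|; last first.
  rewrite card_family foldrE big_map big_enum; apply: eq_bigr => k _.
  by rewrite -cards_draws; apply: eq_card => B; rewrite !inE.
apply: eq_card => B; apply/imsetP/familyP => [[sg + ->] k | B_F].
  rewrite inE => /forallP/(_ k) nup_k; rewrite ffunE inE nup_k andbT.
  by apply/fintype.subsetP => i; rewrite !inE => /andP[].
have B_lam k i : i \in B k -> lam i = k.
  by have /andP[/fintype.subsetP B_k _] := B_F k => /B_k; rewrite inE => /eqP.
have upsetsB : upsets [ffun i => i \in B (lam i)] = B.
  apply/ffunP => k; apply/setP => i; rewrite !ffunE !inE ffunE.
  by apply/andP/idP => [[/eqP <-] | /[dup] /B_lam ->].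
exists [ffun i => i \in B (lam i)] => //; rewrite inE; apply/forallP => k.
by have /andP[_ /eqP <-] := B_F k; rewrite -[in X in _ == X]upsetsB ffunE.
Qed.

End Fiber.

Section Kac.
Context {R : realType} {N d : nat} (lam : 'I_N -> 'I_d).
Hypothesis lam_surj : forall k : 'I_d, exists i : 'I_N, lam i = k.
Hypothesis N_gt0 : (0 < N)%N.
Variable sg0 : {ffun 'I_N -> bool}.
Local Notation sgT := {ffun 'I_N -> bool}.
Local Notation z := (gamma R lam sg0).
Local Notation tail t sg := (tail_prob lam (gamma R lam sg) z t).
Local Notation tail_off t sg := ((gamma R lam sg != z)%:R * tail t sg).
Local Notation fiber := [set sg : sgT | gamma R lam sg == z].

Let NR_gt0 : 0 < N%:R :> R. Proof. by rewrite ltr0n. Qed.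

Lemma tail_gammaS t sg : tail t.+1 sg = N%:R^-1 * \sum_(i < N) tail_off t (flip sg i).
Proof.
by rewrite tail_probS (sum_rate_stepf _ lam_surj sg (fun y => (y != z)%:R * tail_prob lam y z t)).
Qed.

Lemma sum_tail_gammaS t : \sum_(sg : sgT) tail t.+1 sg = \sum_(sg : sgT) tail_off t sg.
Proof.
under eq_bigr do rewrite tail_gammaS.
rewrite -mulr_sumr exchange_big /=.
under eq_bigr do rewrite (sum_flip (fun sg => tail_off t sg)).
by rewrite sumr_const card_ord -[X in _ * X]mulr_natl mulKf // gt_eqF.
Qed.

Lemma sum_tail_off t :
  \sum_(sg : sgT) tail_off t sg = \sum_(sg : sgT) tail t sg - #|fiber|%:R * tail_prob lam z z t.
Proof.
have off_sg sg : tail_off t sg = tail t sg - (gamma R lam sg == z)%:R * tail_prob lam z z t.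
  by have [->|_] := eqVneq (gamma R lam sg) z; rewrite ?mul0r ?mul1r ?subr0 ?subrr.
rewrite (eq_bigr _ (fun sg _ => off_sg sg)) sumrB -mulr_suml natr_card_set.
rewrite (big_mkcond (fun sg => gamma R lam sg == z)); congr (_ - _ * _).
by apply: eq_bigr => sg _; case: (_ == _).
Qed.

Lemma kac_partial_sum T : #|fiber|%:R * \sum_(t < T) tail_prob lam z z t =
  (2 ^ N)%:R - \sum_(sg : sgT) tail T sg.
Proof.
elim: T => [|T IH].
  under [in RHS]eq_bigr do rewrite tail_prob0.
  by rewrite big_ord0 mulr0 sumr_const card_ffun card_bool card_ord subrr.
by rewrite big_ord_recr /= mulrDr IH sum_tail_gammaS sum_tail_off; ring.
Qed.

Lemma tail_gamma_ge0 t sg : 0 <= tail t sg.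
Proof.
elim: t sg => [|t IH] sg; first by rewrite tail_prob0 ler01.
by rewrite tail_gammaS mulr_ge0 ?invr_ge0 ?ler0n ?sumr_ge0 // => i _; rewrite mulr_ge0 ?ler0n.
Qed.

Lemma tail_off_le t sg : tail_off t sg <= tail t sg.
Proof. by case: (_ != _); rewrite ?mul1r ?mul0r ?tail_gamma_ge0. Qed.

Lemma tail_gamma_le1 t sg : tail t sg <= 1.
Proof.
elim: t sg => [|t IH] sg; first by rewrite tail_prob0 lexx.
rewrite tail_gammaS ler_pdivrMl // mulr1.
apply: (@le_trans _ _ (\sum_(i < N) (1 : R))); last by rewrite sumr_const card_ord.
by apply: ler_sum => i _; apply: le_trans (tail_off_le _ _) (IH _).
Qed.

Lemma tail_gamma_markov s t (al : R) : (forall sg, tail t sg <= al) ->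
  forall sg, tail (t + s) sg <= al * tail s sg.
Proof.
move=> le_al; elim: s => [|s IH] sg; first by rewrite addn0 tail_prob0 mulr1.
rewrite addnS !tail_gammaS mulrCA ler_pM2l ?invr_gt0 // mulr_sumr.
by apply: ler_sum => i _; rewrite mulrCA ler_wpM2l ?ler0n.
Qed.

Lemma tail_gamma_nonincr t sg : tail t.+1 sg <= tail t sg.
Proof. by have := tail_gamma_markov t _ _ (tail_gamma_le1 1) sg; rewrite add1n mul1r. Qed.

(* The first move flips a coordinate where sg and sg0 differ with probability 1/N, so z
   is hit within h = hamming sg sg0 steps with probability at least N^-h. *)
Lemma tail_off_hamming h t sg : hamming sg sg0 = h -> (h <= t)%N ->
  tail_off t sg <= 1 - N%:R^-1 ^+ h.
Proof.
elim: h t sg => [|h IH] t sg hd ht.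
  by rewrite (hamming_eq0 _ _ hd) eqxx mul0r expr0 subrr.
have [i neq_i] : exists i, sg i != sg0 i.
  have /card_gt0P[i] : (0 < hamming sg sg0)%N by rewrite hd.
  by rewrite inE; exists i.
case: t ht => // t ht; apply: le_trans (tail_off_le _ _) _.
rewrite tail_gammaS (bigD1 i) //= ler_pdivrMl //.
have le_i : tail_off t (flip sg i) <= 1 - N%:R^-1 ^+ h.
  by apply: IH => //; rewrite hamming_flip // hd.
have le_rest : \sum_(j < N | j != i) tail_off t (flip sg j) <= N%:R - 1.
  apply: (@le_trans _ _ (\sum_(j < N | j != i) (1 : R))).
    by apply: ler_sum => j _; apply: le_trans (tail_off_le _ _) (tail_gamma_le1 _ _).
  by rewrite sumr_const cardC1 card_ord -(prednK N_gt0) -natr1 addrK.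
apply: le_trans (lerD le_i le_rest) _.
by rewrite exprS mulrBr mulr1 mulrA mulfV ?gt_eqF // mul1r; lra.
Qed.

Lemma tail_gamma_mixing sg : tail N.+1 sg <= 1 - N%:R^-1 ^+ N.
Proof.
rewrite tail_gammaS ler_pdivrMl //.
apply: (@le_trans _ _ (\sum_(i < N) (1 - N%:R^-1 ^+ N))); last first.
  by rewrite sumr_const card_ord mulr_natl.
apply: ler_sum => i _; apply: le_trans (tail_off_hamming _ _ _ (erefl _) (hamming_le _ _)) _.
by rewrite lerB // ler_wiXn2l ?hamming_le ?invr_ge0 ?ler0n // invf_le1 // ler1n.
Qed.

Lemma sum_tail_gamma_cvg0 : ((fun T => \sum_(sg : sgT) tail T sg) @ \oo --> 0)%classic.
Proof.
apply: (@nonincreasing_contraction_cvg0 _ _ N.+1 (1 - N%:R^-1 ^+ N)).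
- by rewrite ltrBlDr ltrDl exprn_gt0 // invr_gt0.
- by move=> T; apply: sumr_ge0 => sg _; exact: tail_gamma_ge0.
- by apply/nonincreasing_seqP => T; apply: ler_sum => sg _; exact: tail_gamma_nonincr.
- move=> T; rewrite mulr_sumr; apply: ler_sum => sg _; rewrite addnC.
  exact: tail_gamma_markov tail_gamma_mixing sg.
Qed.

Theorem exp_hit_kac : exp_hit lam z z = ((2 ^ N)%:R / #|fiber|%:R)%:E.
Proof.
have M0 : #|fiber|%:R != 0 :> R.
  by rewrite pnatr_eq0 -lt0n; apply/card_gt0P; exists sg0; rewrite inE.
rewrite /exp_hit; apply: cvg_lim => //.
under eq_fun => T do
  rewrite sumEFin big_mkord -[\sum_(t < T) _](mulKf M0) kac_partial_sum mulrC.
have -> : (2 ^ N)%:R / #|fiber|%:R = ((2 ^ N)%:R - 0) / #|fiber|%:R :> R by rewrite subr0.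
apply: cvg_EFin; first exact: nearW.
apply: cvgM; last exact: cvg_cst.
by apply: cvgB; [exact: cvg_cst | exact: sum_tail_gamma_cvg0].
Qed.

End Kac.

Lemma sum_csize (N d : nat) (lam : 'I_N -> 'I_d) : (\sum_(k < d) csize lam k)%N = N.
Proof.
rewrite -[RHS]card_ord -sum1_card (partition_big lam xpredT) //=.
by apply: eq_bigr => k _; rewrite /csize -sum1_card; apply: eq_bigl => i; rewrite inE.
Qed.

Lemma card_gamma_fiber (R : realType) (N d : nat) (lam : 'I_N -> 'I_d) :
  (forall k : 'I_d, exists i : 'I_N, lam i = k) -> forall sg0 : {ffun 'I_N -> bool},
  #|[set sg | gamma R lam sg == gamma R lam sg0]| =
  (\prod_(k < d) 'C(csize lam k, nup lam sg0 k))%N.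
Proof.
move=> lam_surj sg0; rewrite -card_nup_fiber.
by apply: eq_card => sg; rewrite !inE gamma_eq_nup.
Qed.

Theorem lemma2p6 (R : realType) :
  exists C : R, 0 < C /\
  forall (N d : nat) (lam : 'I_N -> 'I_d),
    (0 < d)%N ->
    (forall k : 'I_d, exists i : 'I_N, lam i = k) ->
    forall sg0 : {ffun 'I_N -> bool},
      (forall sg : {ffun 'I_N -> bool}, Qs R lam sg <= Qs R lam sg0) ->
      exists eps : 'I_d -> R,
        (forall k : 'I_d, `|eps k| <= C / (csize lam k)%:R) /\
        exp_hit lam (gamma R lam sg0) (gamma R lam sg0) =
          (\prod_(k < d) (Num.sqrt (pi / 2 * (csize lam k)%:R) * (1 + eps k)))%:E.
Proof.
exists 2; split=> // N d lam d_gt0 lam_surj sg0 sg0_max.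
have N_gt0 : (0 < N)%N.
  by have [i _] := lam_surj (Ordinal d_gt0); exact: leq_ltn_trans (leq0n i) (ltn_ord i).
pose q k : R := (2 ^ csize lam k)%:R / 'C(csize lam k, nup lam sg0 k)%:R.
pose s k : R := Num.sqrt (pi / 2 * (csize lam k)%:R).
exists (fun k => q k / s k - 1); split.
  move=> k; have [n_le n_ge] := Qs_max_central _ _ sg0_max k.
  by rewrite /q /s; exact: exp2_div_bin_sqrt (csize_gt0 _ lam_surj k) n_le n_ge.
rewrite exp_hit_kac // card_gamma_fiber //; congr _%:E.
rewrite (eq_bigr q) => [|k _]; last first.
  have s_gt0 : 0 < s k by rewrite sqrtr_gt0 !mulr_gt0 ?pi_gt0 // ltr0n (csize_gt0 _ lam_surj).
  by rewrite addrC subrK mulrC divfK // gt_eqF.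
by rewrite prodf_div -!natr_prod -expn_sum sum_csize.
Qed.
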